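(* Under the setting of the context, let $f^*=\min\{\|F_2\|_1 : S\in\mathbb{R}^{k\times n},\,F_2\in\mathbb{R}^{m\times n},\,A_2=QS+F_2\}$. Then there is a constant $C\ge0$ such that $f^*-\|F_2^{(k)}\|_1\le \frac{C}{\mu_k}$ for all $k=1,2,\dots$.
   Context: For a matrix $X$, $\|X\|_1=\sum_{i,j}|X_{ij}|$, $\|X\|_\infty=\max_{i,j}|X_{ij}|$, $\|X\|_F$ the Frobenius norm, $\langle Y,X\rangle=\mathrm{Trace}(Y^\top X)$. The shrinkage operator $\mathcal{S}_\tau$ acts entrywise by $\mathcal{S}_\tau(x)=\mathrm{sign}(x)\max\{|x|-\tau,0\}$. Augmented Lagrangian: $L(S,F_2,Y,\mu)=\|F_2\|_1+\langle Y,A_2-QS-F_2\rangle+\frac{\mu}{2}\|A_2-QS-F_2\|_F^2$, with $A_2\in\mathbb{R}^{m\times n}$, $A_2\ne0$, $Q\in\mathbb{R}^{m\times k}$, $Q^\top Q=I_k$, $\mu_0>0$, $\rho>1$, and $S^{(0)},F_2^{(0)}$ arbitrary. ALM iteration: $Y^{(0)}=A_2/\|A_2\|_\infty$, and for $k\ge0$: $S^{(k+1)}=Q^\top(A_2-F_2^{(k)}+\frac{1}{\mu_k}Y^{(k)})$, $F_2^{(k+1)}=\mathcal{S}_{1/\mu_k}(A_2-QS^{(k+1)}+\frac{1}{\mu_k}Y^{(k)})$, $Y^{(k+1)}=Y^{(k)}+\mu_k(A_2-QS^{(k+1)}-F_2^{(k+1)})$, $\mu_{k+1}=\rho\mu_k$.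 *)

From HB Require Import structures.
From mathcomp Require Import all_boot all_order all_algebra.
Set Implicit Arguments. Unset Strict Implicit. Unset Printing Implicit Defensive.
Import Order.TTheory GRing.Theory Num.Theory.
Local Open Scope ring_scope.

Definition norm1 (R : realFieldType) (m n : nat) (X : 'M[R]_(m, n)) : R :=
  \sum_(i < m) \sum_(j < n) `|X i j|.

Definition normInf (R : realFieldType) (m n : nat) (X : 'M[R]_(m, n)) : R :=
  \big[Num.max/0]_(i < m) \big[Num.max/0]_(j < n) `|X i j|.

Definition shrink (R : realFieldType) (tau x : R) : R :=
  Num.sg x * Num.max (`|x| - tau) 0.

Definition shrinkmx (R : realFieldType) (m n : nat) (tau : R) (X : 'M[R]_(m, n))
  : 'M[R]_(m, n) := map_mx (shrink tau) X.

(* The ALM iterates (S^(k), F_2^(k), Y^(k), mu_k); here p plays the role of the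
   paper's inner dimension k (Q is m x p). *)
Fixpoint alm (R : realFieldType) (m n p : nat) (A2 : 'M[R]_(m, n)) (Q : 'M[R]_(m, p))
  (mu0 rho : R) (S0 : 'M[R]_(p, n)) (F0 : 'M[R]_(m, n)) (k : nat)
  : 'M[R]_(p, n) * 'M[R]_(m, n) * 'M[R]_(m, n) * R :=
  match k with
  | 0 => (S0, F0, (normInf A2)^-1 *: A2, mu0)
  | k'.+1 =>
    let: (Sk, F, Y, mu) := alm A2 Q mu0 rho S0 F0 k' in
    let S' := Q^T *m (A2 - F + mu^-1 *: Y) in
    let F' := shrinkmx mu^-1 (A2 - Q *m S' + mu^-1 *: Y) in
    let Y' := Y + mu *: (A2 - Q *m S' - F') in
    (S', F', Y', rho * mu)
  end.

Definition alm_S R m n p A2 Q mu0 rho S0 F0 k :=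
  (@alm R m n p A2 Q mu0 rho S0 F0 k).1.1.1.
Definition alm_F R m n p A2 Q mu0 rho S0 F0 k :=
  (@alm R m n p A2 Q mu0 rho S0 F0 k).1.1.2.
Definition alm_Y R m n p A2 Q mu0 rho S0 F0 k :=
  (@alm R m n p A2 Q mu0 rho S0 F0 k).1.2.
Definition alm_mu R m n p A2 Q mu0 rho S0 F0 k :=
  (@alm R m n p A2 Q mu0 rho S0 F0 k).2.

(** Every dual iterate after the first has entries in [-1, 1]: [Y^(k+1) = mu_k (Z - S_{1/mu_k}(Z))]
    for some [Z], and shrinkage moves each entry by at most [1/mu_k].  Hence the [Y^(k)] stay
    in a fixed l1-ball of radius [K], and the primal residual
    [A_2 - Q S^(k+1) - F_2^(k+1) = (Y^(k+1) - Y^(k)) / mu_k] has l1 norm at most [2K/mu_k].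
    Since [(S^(k+1), A_2 - Q S^(k+1))] is feasible,
    [f^* <= ||A_2 - Q S^(k+1)||_1 <= ||F_2^(k+1)||_1 + 2 rho K / mu_(k+1)]. *)

From HB Require Import structures.
From mathcomp Require Import all_boot all_order all_algebra.
From mathcomp Require Import lra.
Set Implicit Arguments. Unset Strict Implicit. Unset Printing Implicit Defensive.
Import Order.TTheory GRing.Theory Num.Theory.
Local Open Scope ring_scope.

Section Norm1.
Variables (R : realFieldType) (m n : nat).
Implicit Types X Y : 'M[R]_(m, n).

Lemma norm1_ge0 X : 0 <= norm1 X.
Proof. by apply: sumr_ge0 => i _; apply: sumr_ge0. Qed.

Lemma norm1D X Y : norm1 (X + Y) <= norm1 X + norm1 Y.
Proof.
rewrite /norm1 -big_split; apply: ler_sum => i _.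
by rewrite -big_split; apply: ler_sum => j _; rewrite mxE ler_normD.
Qed.

Lemma norm1Z a X : norm1 (a *: X) = `|a| * norm1 X.
Proof.
rewrite /norm1 mulr_sumr; apply: eq_bigr => i _.
by rewrite mulr_sumr; apply: eq_bigr => j _; rewrite mxE normrM.
Qed.

Lemma norm1N X : norm1 (- X) = norm1 X.
Proof. by rewrite -scaleN1r norm1Z normrN1 mul1r. Qed.

Lemma norm1_le_entries (c : R) X :
  (forall i j, `|X i j| <= c) -> norm1 X <= (m * n)%:R * c.
Proof.
move=> X_le; have -> : (m * n)%:R * c = \sum_(i < m) \sum_(j < n) c.
  by rewrite !sumr_const !card_ord -mulrnA mulr_natl mulnC.
by apply: ler_sum => i _; apply: ler_sum => j _.
Qed.

End Norm1.

Lemma shrink_residual_le (R : realFieldType) (t x : R) :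
  0 <= t -> `|x - shrink t x| <= t.
Proof.
move=> t_ge0; rewrite /shrink {1}(numEsg x) -mulrBr normrM normr_sg.
have [-> | _] := eqVneq x 0; first by rewrite mul0r.
rewrite mul1r maxEle; case: (lerP (`|x| - t) 0) => h.
  by rewrite subr0 normr_id; lra.
by rewrite opprB addrC subrK ger0_norm.
Qed.

Section ALM.
Variables (R : realFieldType) (m n p : nat).
Variables (A2 : 'M[R]_(m, n)) (Q : 'M[R]_(m, p)) (mu0 rho : R).
Variables (S0 : 'M[R]_(p, n)) (F0 : 'M[R]_(m, n)).

Local Notation S := (alm_S A2 Q mu0 rho S0 F0).
Local Notation F := (alm_F A2 Q mu0 rho S0 F0).
Local Notation Y := (alm_Y A2 Q mu0 rho S0 F0).
Local Notation mu := (alm_mu A2 Q mu0 rho S0 F0).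

Lemma alm_muS k : mu k.+1 = rho * mu k.
Proof. by rewrite /alm_mu /=; case: alm => [[[]]]. Qed.

Lemma alm_FS k :
  F k.+1 = shrinkmx (mu k)^-1 (A2 - Q *m S k.+1 + (mu k)^-1 *: Y k).
Proof. by rewrite /alm_F /alm_mu /alm_S /alm_Y /=; case: alm => [[[]]]. Qed.

Lemma alm_YS k : Y k.+1 = Y k + mu k *: (A2 - Q *m S k.+1 - F k.+1).
Proof. by rewrite /alm_F /alm_mu /alm_S /alm_Y /=; case: alm => [[[]]]. Qed.

Hypotheses (mu0_gt0 : 0 < mu0) (rho_gt0 : 0 < rho).

Lemma alm_mu_gt0 k : 0 < mu k.
Proof. by elim: k => // k IHk; rewrite alm_muS mulr_gt0. Qed.

Lemma alm_residual k :
  A2 - Q *m S k.+1 - F k.+1 = (mu k)^-1 *: (Y k.+1 - Y k).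
Proof.
by rewrite alm_YS [Y k + _]addrC addrK scalerA mulVf ?scale1r // gt_eqF ?alm_mu_gt0.
Qed.

Lemma alm_Y_entry_le1 k i j : `|Y k.+1 i j| <= 1.
Proof.
set Z := A2 - Q *m S k.+1 + (mu k)^-1 *: Y k.
have mu_gt0 := alm_mu_gt0 k.
have -> : Y k.+1 = mu k *: (Z - F k.+1).
  rewrite /Z addrAC scalerDr scalerA mulfV ?gt_eqF // scale1r [RHS]addrC.
  exact: alm_YS.
rewrite alm_FS -/Z !mxE normrM gtr0_norm // -(mulfV (lt0r_neq0 mu_gt0)) ler_pM2l //.
by rewrite shrink_residual_le // invr_ge0 ltW.
Qed.

Definition alm_dual_bound : R := (m * n)%:R + norm1 (Y 0).

Lemma alm_norm1Y_le k : norm1 (Y k) <= alm_dual_bound.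
Proof.
case: k => [|k]; first by rewrite lerDr ler0n.
apply: le_trans (norm1_le_entries (@alm_Y_entry_le1 k)) _.
by rewrite mulr1 lerDl norm1_ge0.
Qed.

Lemma alm_norm1_residual_le k :
  norm1 (A2 - Q *m S k.+1 - F k.+1) <= rho * (2 * alm_dual_bound) / mu k.+1.
Proof.
have mu_gt0 := alm_mu_gt0 k.
rewrite alm_residual norm1Z gtr0_norm ?invr_gt0 // alm_muS invfM mulrCA.
rewrite !mulrA mulVf ?lt0r_neq0 // mul1r mulrC ler_pM2r ?invr_gt0 //.
rewrite mulr_natl mulr2n.
apply: le_trans (norm1D _ _) _; rewrite norm1N.
by apply: lerD; apply: alm_norm1Y_le.
Qed.

End ALM.

Theorem mainTheorem4 (R : realFieldType) (m n p : nat)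
  (A2 : 'M[R]_(m, n)) (Q : 'M[R]_(m, p)) (mu0 rho : R)
  (S0 : 'M[R]_(p, n)) (F0 : 'M[R]_(m, n)) (fstar : R) :
  A2 != 0 ->
  Q^T *m Q = 1%:M ->
  0 < mu0 ->
  1 < rho ->
  (exists (S : 'M[R]_(p, n)) (F2 : 'M[R]_(m, n)),
      A2 = Q *m S + F2 /\ norm1 F2 = fstar) ->
  (forall (S : 'M[R]_(p, n)) (F2 : 'M[R]_(m, n)),
      A2 = Q *m S + F2 -> fstar <= norm1 F2) ->
  exists C : R, 0 <= C /\
    forall k : nat, (1 <= k)%N ->
      fstar - norm1 (alm_F A2 Q mu0 rho S0 F0 k)
        <= C / alm_mu A2 Q mu0 rho S0 F0 k.
Proof.
move=> _ _ mu0_gt0 rho_gt1 _ fstar_le.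
have rho_gt0 : 0 < rho by lra.
set K := alm_dual_bound A2 Q mu0 rho S0 F0.
have K_ge0 : 0 <= K by rewrite addr_ge0 ?norm1_ge0.
exists (rho * (2 * K)); split; first by rewrite !mulr_ge0 // ltW.
case=> [//|k] _; pose S := alm_S A2 Q mu0 rho S0 F0 k.+1.
set F := alm_F A2 Q mu0 rho S0 F0 k.+1.
have feasible : A2 = Q *m S + (A2 - Q *m S) by rewrite addrC subrK.
rewrite lerBlDl; apply: le_trans (fstar_le _ _ feasible) _.
have -> : A2 - Q *m S = F + (A2 - Q *m S - F) by rewrite [F + _]addrC subrK.
apply: le_trans (norm1D _ _) _; rewrite lerD2l.
exact: alm_norm1_residual_le.
Qed.
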